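(* Let $d\ge1$, $\emptyset\ne H\subset\mathbb{R}^d$, $R>0$, and let $x,y\in\mathbb{R}^d$ with $d(x,H)\ge R$ and $d(y,H)\ge R$. Let $f(t):=d(T_tx,T_ty)$ for $t\ge0$. Then for every $0\le t<R$, $f$ is differentiable at $t$ (one-sidedly at $t=0$) and $$-\dot f(t)\le\frac{f(t)}{R-t}.$$
   Context: $d(\cdot,\cdot)$ is Euclidean distance and $d(x,H)=\inf_{z\in H}|x-z|$. Let $\bar H$ be the closure of $H$; for each $x$ let $\pi(x)\in\bar H$ be a point with $|x-\pi(x)|=d(x,H)$ (any one if several). For $t\ge0$, $T_t x:=x+t\frac{\pi(x)-x}{|\pi(x)-x|}$ if $d(x,H)>t$ and $T_t x:=\pi(x)$ if $d(x,H)\le t$. *)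

From HB Require Import structures.
From mathcomp Require Import all_boot all_order all_algebra.
From mathcomp Require Import all_classical all_reals all_analysis.
Set Implicit Arguments. Unset Strict Implicit. Unset Printing Implicit Defensive.
Import Order.TTheory GRing.Theory Num.Theory.
Import numFieldNormedType.Exports.
Local Open Scope classical_set_scope.
Local Open Scope ring_scope.

Definition enorm {R : realType} {d : nat} (v : 'rV[R]_d) : R :=
  Num.sqrt (\sum_(i < d) (v ord0 i) ^+ 2).

Definition distH {R : realType} {d : nat} (H : set 'rV[R]_d) (x : 'rV[R]_d) : R :=
  inf [set enorm (x - z) | z in H].

(* T_t x, given a nearest-point selection pi *)
Definition Tmap {R : realType} {d : nat} (H : set 'rV[R]_d)
  (pi : 'rV[R]_d -> 'rV[R]_d) (t : R) (x : 'rV[R]_d) : 'rV[R]_d :=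
  if t < distH H x then x + (t / enorm (pi x - x)) *: (pi x - x) else pi x.

From HB Require Import structures.
From mathcomp Require Import all_boot all_order all_algebra.
From mathcomp Require Import all_classical all_reals all_analysis.
From mathcomp Require Import ring lra.
Import Order.TTheory GRing.Theory Num.Theory.
Import numFieldNormedType.Exports.
Local Open Scope classical_set_scope.
Local Open Scope ring_scope.
Set Implicit Arguments. Unset Strict Implicit.

(* For [s < d(x,H)] the trajectory [T_s x = x + s u] runs at unit speed along
   the segment towards [pi x], and likewise [T_s y = y + s w]; so near [t] the
   function [f] is [h |-> |p + h (u - w)|] with [p = T_t x - T_t y], whose
   derivative at [h = 0] is [<p, u - w> / |p|] as soon as [p <> 0].
   Since [pi y] lies in the closure of [H], [|x - pi y| >= d(x,H)], hence
   [|T_t x - pi y| >= d(x,H) - t].  Expanding this and its mirror image for [y]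
   and combining them with weights [d(x,H) - t] and [d(y,H) - t] gives
   [- <p, u - w> (R - t) <= |p|^2], which is the claimed bound.  When [p = 0]
   and [t > 0], the same two inequalities at time [0] force [u = w], so that
   [f] is constant near [t]. *)

Section Euclid.
Variables (R : realType) (d : nat).
Implicit Types (q e u v w : 'rV[R]_d).

Definition dot u v : R := \sum_(i < d) u ord0 i * v ord0 i.

Lemma dotC u v : dot u v = dot v u.
Proof. by apply: eq_bigr => i _; rewrite mulrC. Qed.

Lemma dotDl u v w : dot (u + v) w = dot u w + dot v w.
Proof. by rewrite /dot -big_split; apply: eq_bigr => i _; rewrite !mxE mulrDl. Qed.

Lemma dotDr u v w : dot w (u + v) = dot w u + dot w v.
Proof. by rewrite dotC dotDl !(dotC w). Qed.

Lemma dotZl a u v : dot (a *: u) v = a * dot u v.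
Proof. by rewrite /dot mulr_sumr; apply: eq_bigr => i _; rewrite !mxE mulrA. Qed.

Lemma dotZr a u v : dot v (a *: u) = a * dot v u.
Proof. by rewrite dotC dotZl dotC. Qed.

Lemma dotNl u v : dot (- u) v = - dot u v.
Proof. by rewrite -scaleN1r dotZl mulN1r. Qed.

Lemma dotNr u v : dot v (- u) = - dot v u.
Proof. by rewrite dotC dotNl dotC. Qed.

Lemma dotBl u v w : dot (u - v) w = dot u w - dot v w.
Proof. by rewrite dotDl dotNl. Qed.

Lemma dotBr u v w : dot w (u - v) = dot w u - dot w v.
Proof. by rewrite dotDr dotNr. Qed.

Lemma dot0l v : dot 0 v = 0.
Proof. by rewrite -(scale0r 0) dotZl mul0r. Qed.

Lemma dot_ge0 u : 0 <= dot u u.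
Proof. by apply: sumr_ge0 => i _; rewrite -expr2 sqr_ge0. Qed.

Lemma dot_eq0 u : dot u u = 0 -> u = 0.
Proof.
move=> /eqP; rewrite psumr_eq0 => [/allP u0|i _]; last by rewrite -expr2 sqr_ge0.
apply/matrixP => i j; rewrite !mxE (ord1 i).
by have /= := u0 j (mem_index_enum j); rewrite mulf_eq0 orbb => /eqP.
Qed.

Lemma dot_addZ u v (h : R) :
  dot (u + h *: v) (u + h *: v) = dot u u + 2 * h * dot u v + h ^+ 2 * dot v v.
Proof. by rewrite !(dotDl, dotDr, dotZl, dotZr) (dotC v u); ring. Qed.

Lemma cauchy_schwarz u v : dot u v ^+ 2 <= dot u u * dot v v.
Proof.
have [/dot_eq0 ->|v0] := eqVneq (dot v v) 0.
  by rewrite dotC !dot0l expr0n /= mulr0.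
have vv_gt0 : 0 < dot v v by rewrite lt_def v0 dot_ge0.
have := dot_ge0 (dot v v *: u - dot u v *: v).
rewrite !(dotBl, dotBr, dotZl, dotZr) (dotC v u) => h.
have : 0 <= dot v v * (dot v v * dot u u - dot u v ^+ 2) by rewrite expr2; lra.
by rewrite pmulr_rge0 // subr_ge0 mulrC.
Qed.

Lemma enormE u : enorm u = Num.sqrt (dot u u).
Proof. by congr Num.sqrt; apply: eq_bigr => i _; rewrite expr2. Qed.

Lemma enorm_ge0 u : 0 <= enorm u.
Proof. by rewrite enormE sqrtr_ge0. Qed.

Lemma sqr_enorm u : enorm u ^+ 2 = dot u u.
Proof. by rewrite enormE sqr_sqrtr // dot_ge0. Qed.

Lemma enorm_triangle u v : enorm (u + v) <= enorm u + enorm v.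
Proof.
rewrite -(ler_pXn2r (n := 2)) ?nnegrE ?addr_ge0 ?enorm_ge0 //.
rewrite sqrrD !sqr_enorm !(dotDl, dotDr) (dotC v u).
have : `|dot u v| <= enorm u * enorm v.
  rewrite -(ler_pXn2r (n := 2)) ?nnegrE ?mulr_ge0 ?enorm_ge0 //.
  by rewrite real_normK ?num_real // exprMn !sqr_enorm cauchy_schwarz.
have := ler_norm (dot u v); lra.
Qed.

Lemma enormN u : enorm (- u) = enorm u.
Proof. by rewrite !enormE dotNl dotNr opprK. Qed.

Lemma enormZ a u : enorm (a *: u) = `|a| * enorm u.
Proof. by rewrite !enormE dotZl dotZr mulrA -expr2 sqrtrM ?sqr_ge0 // sqrtr_sqr. Qed.

Lemma enorm_le_mx_norm u : enorm u <= d%:R * `|u|.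
Proof.
rewrite enormE -[X in _ <= X]ger0_norm ?mulr_ge0 // -sqrtr_sqr.
rewrite ler_wsqrtr // /dot.
have entry_le i : `|u ord0 i| <= `|u|.
  rewrite [X in _ <= X](_ : _ = mx_norm u) // mx_normrE.
  exact: (le_bigmax 0 (fun ij : 'I_1 * 'I_d => `|u ij.1 ij.2|) (ord0, i)).
apply: (@le_trans _ _ (\sum_(i < d) `|u|^+2)).
  apply: ler_sum => i _; rewrite -expr2 -real_normK ?num_real //.
  by rewrite lerXn2r ?nnegrE.
rewrite sumr_const card_ord exprMn -[X in X <= _]mulr_natl.
apply: ler_wpM2r; first exact: sqr_ge0.
by rewrite -natrX ler_nat; case: d => // n; rewrite leq_pmulr.
Qed.

Lemma enorm_addZ_unit_ge q e (D t : R) : dot e e = 1 -> D <= enorm q -> 0 <= t ->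
  D - t <= enorm (q + t *: e).
Proof.
move=> e_unit le_Dq t_ge0.
have := enorm_triangle (q + t *: e) (- (t *: e)).
rewrite addrK enormN enormZ ger0_norm // [enorm e]enormE e_unit sqrtr1 mulr1; lra.
Qed.

Lemma sqr_le_dot (a : R) u : 0 <= a -> a <= enorm u -> a ^+ 2 <= dot u u.
Proof. by move=> a_ge0 le_au; rewrite -sqr_enorm lerXn2r ?nnegrE ?enorm_ge0. Qed.

End Euclid.

Section Distance.
Variables (R : realType) (d : nat) (H : set 'rV[R]_d).

Lemma distH_le x z : H z -> distH H x <= enorm (x - z).
Proof.
move=> Hz; apply: ge_inf; last by exists z.
by exists 0 => _ [z' _ <-]; exact: enorm_ge0.
Qed.

Lemma distH_le_closure x c : closure H c -> distH H x <= enorm (x - c).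
Proof.
move=> Hc; rewrite leNgt; apply/negP => lt_xc.
set del := distH H x - enorm (x - c).
have del_gt0 : 0 < del by rewrite subr_gt0.
have eps_gt0 : 0 < del / (d%:R + 1) by rewrite divr_gt0 // ltr_wpDl.
have [z [Hz /=]] := Hc _ (nbhsx_ballx c _ eps_gt0).
rewrite mx_norm_ball /ball /= => cz_lt.
have cz_small : enorm (c - z) < del.
  apply: (le_lt_trans (enorm_le_mx_norm _)).
  apply: (@le_lt_trans _ _ (d%:R * (del / (d%:R + 1)))).
    by rewrite ler_wpM2l // ltW.
  by rewrite mulrA ltr_pdivrMr ?ltr_wpDl // [X in X < _]mulrC ltr_pM2l // ltrDl.
have := enorm_triangle (x - c) (c - z); rewrite addrA subrK.
have := distH_le x Hz; rewrite /del in cz_small; lra.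
Qed.

End Distance.

Section NearestPointFlow.
Variables (R : realType) (d : nat) (H : set 'rV[R]_d) (pi : 'rV[R]_d -> 'rV[R]_d).
Hypothesis pi_nearest : forall z, closure H (pi z) /\ enorm (z - pi z) = distH H z.

Definition dir x := (distH H x)^-1 *: (pi x - x).

Lemma Tmap_dir t x : t < distH H x -> Tmap H pi t x = x + t *: dir x.
Proof.
move=> lt_tx; rewrite /Tmap lt_tx -enormN opprB (proj2 (pi_nearest x)).
by rewrite scalerA.
Qed.

Lemma dir_unit x : 0 < distH H x -> dot (dir x) (dir x) = 1.
Proof.
move=> Dx_gt0; rewrite dotZl dotZr -sqr_enorm -enormN opprB (proj2 (pi_nearest x)).
by rewrite mulrA -expr2 -exprMn mulVf ?gt_eqF // expr1n.
Qed.

Lemma distH_le_dir x y : 0 < distH H y -> distH H x <= enorm (x - (y + distH H y *: dir y)).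
Proof.
move=> Dy_gt0; rewrite scalerA mulfV ?gt_eqF // scale1r subrKC.
exact/distH_le_closure/(proj1 (pi_nearest y)).
Qed.

End NearestPointFlow.

Lemma weighted_drift_le (R : realType) (P al be rx ry s : R) :
  0 < s -> s <= rx -> s <= ry -> 0 <= P ->
  rx ^+ 2 <= P - 2 * ry * be + ry ^+ 2 -> ry ^+ 2 <= P + 2 * rx * al + rx ^+ 2 ->
  (be - al) * s <= P.
Proof.
move=> s_gt0 s_rx s_ry P_ge0 le_rx le_ry.
have [drift_le0|drift_gt0] := lerP (be - al) 0.
  exact: le_trans (mulr_le0_ge0 drift_le0 (ltW s_gt0)) P_ge0.
(* [rx * le_rx + ry * le_ry], since [rx^3 + ry^3 - rx ry (rx + ry) = (rx + ry) (rx - ry)^2] *)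
have : 2 * rx * ry * (be - al) <= P * (rx + ry).
  have := ler_wpM2l (ltW (lt_le_trans s_gt0 s_rx)) le_rx.
  have := ler_wpM2l (ltW (lt_le_trans s_gt0 s_ry)) le_ry.
  have : 0 <= (rx + ry) * (rx - ry) ^+ 2 by rewrite mulr_ge0 ?sqr_ge0 //; lra.
  rewrite !expr2; nra.
(* the harmonic mean of [rx] and [ry] is at least [s] *)
have : s * (rx + ry) <= 2 * rx * ry by nra.
have rxry_gt0 : 0 < rx + ry by lra.
move=> le_s_hmean le_P; rewrite -(ler_pM2r rxry_gt0); nra.
Qed.

Section TwoRays.
Variables (R : realType) (d : nat) (x y u w : 'rV[R]_d) (Dx Dy : R).
Hypotheses (u_unit : dot u u = 1) (w_unit : dot w w = 1).
Hypotheses (far_x : Dx <= enorm (x - (y + Dy *: w)))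
           (far_y : Dy <= enorm (y - (x + Dx *: u))).

Let gap t := x + t *: u - (y + t *: w).

Lemma gap_drift_le t s : 0 <= t -> 0 < s -> s <= Dx - t -> s <= Dy - t ->
  - dot (gap t) (u - w) * s <= dot (gap t) (gap t).
Proof.
move=> t_ge0 s_gt0 s_rx s_ry.
have le_rx : (Dx - t) ^+ 2 <=
    dot (gap t + (- (Dy - t)) *: w) (gap t + (- (Dy - t)) *: w).
  have -> : gap t + (- (Dy - t)) *: w = x - (y + Dy *: w) + t *: u.
    by apply/matrixP => i j; rewrite !mxE; ring.
  by apply: sqr_le_dot; [lra | exact: enorm_addZ_unit_ge].
have le_ry : (Dy - t) ^+ 2 <=
    dot (- gap t + (- (Dx - t)) *: u) (- gap t + (- (Dx - t)) *: u).
  have -> : - gap t + (- (Dx - t)) *: u = y - (x + Dx *: u) + t *: w.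
    by apply/matrixP => i j; rewrite !mxE; ring.
  by apply: sqr_le_dot; [lra | exact: enorm_addZ_unit_ge].
rewrite !dot_addZ !dotNl !dotNr opprK u_unit w_unit !sqrrN in le_rx le_ry.
rewrite dotBr opprB.
apply: (weighted_drift_le s_gt0 s_rx s_ry (dot_ge0 _)); lra.
Qed.

Lemma gap_eq0_dir t : 0 < t -> t < Dx -> t < Dy -> gap t = 0 -> u = w.
Proof.
move=> t_gt0 t_Dx t_Dy gap0.
have le_x : Dx ^+ 2 <= dot (t *: u + (Dy - t) *: w) (t *: u + (Dy - t) *: w).
  have split_x : x - (y + Dy *: w) = gap t - (t *: u + (Dy - t) *: w).
    by apply/matrixP => i j; rewrite !mxE; ring.
  have := far_x; rewrite split_x gap0 sub0r enormN; apply: sqr_le_dot; lra.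
have le_y : Dy ^+ 2 <= dot (t *: w + (Dx - t) *: u) (t *: w + (Dx - t) *: u).
  have split_y : y - (x + Dx *: u) = - gap t - (t *: w + (Dx - t) *: u).
    by apply/matrixP => i j; rewrite !mxE; ring.
  have := far_y; rewrite split_y gap0 oppr0 sub0r enormN; apply: sqr_le_dot; lra.
rewrite !dot_addZ !dotZl !dotZr u_unit w_unit (dotC w u) in le_x le_y.
have : t * (Dx + Dy - 2 * t) * (1 - dot u w) <= 0 by nra.
rewrite pmulr_rle0 ?mulr_gt0 //; last by lra.
move=> uw_ge1; apply/eqP; rewrite -subr_eq0; apply/eqP/dot_eq0/eqP.
rewrite eq_le dot_ge0 !(dotBl, dotBr) u_unit w_unit (dotC w u); lra.
Qed.

End TwoRays.

Lemma is_derive1_quotient (R : realType) (f : R -> R) (a D : R) : is_derive a (1 : R) f D ->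
  (fun h => (f (a + h) - f a) / h) @ 0^' --> D.
Proof.
move=> fD; have := cvgP _ (@ex_derive _ _ _ _ _ _ _ fD).
rewrite -[lim _]/('D_1 f a) derive_val.
suff -> : (fun h => (f (a + h) - f a) / h) =
          (fun h => h^-1 *: ((f \o shift a) h%:A - f a)) by [].
by apply/funext => h; rewrite /= -[h%:A]/(h * 1) mulr1 (addrC h a) mulrC.
Qed.

Lemma is_derive_enorm_line (R : realType) (d : nat) (p v : 'rV[R]_d) : (p = 0 -> v = 0) ->
  is_derive (0 : R) (1 : R) (fun h : R => enorm (p + h *: v)) (dot p v / enorm p).
Proof.
have [-> _|v0 p0v0] := eqVneq v 0.
  rewrite dotC dot0l mul0r.
  under [X in is_derive _ _ X]funext => h do rewrite scaler0 addr0.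
  exact: is_derive_cst.
have P_gt0 : 0 < dot p p.
  by rewrite lt_def dot_ge0 andbT; apply/eqP => /dot_eq0 /p0v0 /eqP; rewrite (negPf v0).
under [X in is_derive _ _ X]funext => h do rewrite enormE dot_addZ.
rewrite enormE.
have -> : dot p v / Num.sqrt (dot p p) = (2 * Num.sqrt (dot p p))^-1 * (2 * dot p v).
  by rewrite invfM mulrACA mulVf ?pnatr_eq0 // mul1r mulrC.
apply: (is_derive1_comp (f := Num.sqrt)
  (g := fun h => dot p p + 2 * h * dot p v + h ^+ 2 * dot v v)).
  by rewrite mulr0 mul0r expr0n /= mul0r !addr0; exact: is_derive1_sqrt.
apply: is_derive_eq.
by rewrite expr0n /= mulr0 !scale0r !add0r scaler0 addr0 mul1r
  -[_ *: _]/(dot p v * (2 * 1)) mulr1 mulrC.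
Qed.

Lemma neg_slope_le (R : realType) (d : nat) (p v : 'rV[R]_d) (s : R) :
  0 < s -> - dot p v * s <= dot p p -> - (dot p v / enorm p) <= enorm p / s.
Proof.
have [->|p0] := eqVneq p 0; first by rewrite enormE !dot0l sqrtr0 invr0 !mul0r oppr0.
have N_gt0 : 0 < enorm p.
  by rewrite enormE sqrtr_gt0 lt_def dot_ge0 andbT; apply: contra p0 => /eqP /dot_eq0 ->.
move=> s_gt0; rewrite -mulNr ler_pdivrMr // mulrAC ler_pdivlMr //.
by rewrite -expr2 sqr_enorm.
Qed.

Theorem corollary1 (R : realType) (d : nat) (H : set 'rV[R]_d)
  (pi : 'rV[R]_d -> 'rV[R]_d) (Rr : R) (x y : 'rV[R]_d) :
  (0 < d)%N ->
  H !=set0 ->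
  (forall z, closure H (pi z) /\ enorm (z - pi z) = distH H z) ->
  0 < Rr ->
  Rr <= distH H x -> Rr <= distH H y ->
  let f := fun t : R => enorm (Tmap H pi t x - Tmap H pi t y) in
  forall t : R, 0 <= t -> t < Rr ->
  exists D : R,
    ((fun h : R => (f (t + h) - f t) / h) @
       within [set h : R | h != 0 /\ 0 <= t + h] (nbhs (0 : R)) --> D)
    /\ - D <= f t / (Rr - t).
Proof.
move=> _ _ pi_nearest Rr_gt0 Rr_x Rr_y f t t_ge0 t_Rr.
have Dx_gt0 : 0 < distH H x by apply: lt_le_trans Rr_x.
have Dy_gt0 : 0 < distH H y by apply: lt_le_trans Rr_y.
set u := dir H pi x; set w := dir H pi y; set p := x + t *: u - (y + t *: w).
have u_unit := dir_unit pi_nearest Dx_gt0.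
have w_unit := dir_unit pi_nearest Dy_gt0.
have far_x := distH_le_dir pi_nearest x Dy_gt0.
have far_y := distH_le_dir pi_nearest y Dx_gt0.
have f_line h : t + h < Rr -> f (t + h) = enorm (p + h *: (u - w)).
  move=> th_Rr; rewrite /f !Tmap_dir //; try lra.
  by congr enorm; apply/matrixP => i j; rewrite !mxE; ring.
have ft : f t = enorm p by have := f_line 0; rewrite !addr0 scale0r addr0; apply.
have p0v0 : p = 0 -> u - w = 0.
  move=> p0; apply/eqP; rewrite subr_eq0; apply/eqP.
  have [t0|t_gt0] := eqVneq t 0.
    suff xy : x = y by rewrite /u /w xy.
    by apply/eqP; rewrite -subr_eq0 -p0 /p t0 !scale0r !addr0.
  by apply: (gap_eq0_dir u_unit w_unit far_x far_y _ _ _ p0); rewrite ?lt_def ?t_gt0; lra.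
exists (dot p (u - w) / enorm p); split; last first.
  rewrite ft; apply: neg_slope_le; first lra.
  by apply: (gap_drift_le u_unit w_unit far_x far_y); lra.
have g_quot := is_derive1_quotient (is_derive_enorm_line p0v0).
apply: cvg_trans (near_eq_cvg _) (cvg_trans (cvg_fmap2 (within_subset _ _)) g_quot).
- have h_small : \forall h \near (0 : R), `|h| < Rr - t by apply: nbhs0_lt; lra.
  apply: filterS h_small => h h_Rr _ /=; rewrite add0r scale0r addr0 -ft f_line //.
  by have := ler_norm h; lra.
- by move=> h [].
Qed.
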